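(* For every $n\ge4$, the matroid $L_n$ is not liftable.
   Context: For $n\ge4$, $L_n$ is the rank-three paving matroid arising from $n$ lines in general position in $\mathbb{P}^2$ and their $\binom n2$ pairwise intersection points: equivalently, its ground set is the set of 2-element subsets $\{i,j\}\subseteq[n]$, and its lines (dependent hyperplanes) are $\ell_i=\{\{i,j\}:j\ne i\}$ for $i\in[n]$; its circuits are the 3-subsets of some $\ell_i$ and the 4-subsets containing no 3-subset of any $\ell_i$. For a matroid $N$ on a finite set $E$, the circuit variety $V_{\mathcal{C}(N)}$ is the set of tuples $(\gamma_e)_{e\in E}$ in $\mathbb{C}^3$ with $(\gamma_e)_{e\in S}$ linearly dependent for every dependent set $S$. $N$ is liftable if for every tuple $(\gamma_e)_{e\in E}$ in $\mathbb{C}^3$ spanning a plane $H$ and every $q\notin H$ there exist scalars $z_e$ such that $(\gamma_e+z_eq)\in V_{\mathcal{C}(N)}$ and the vectors $\gamma_e+z_eq$ do not all lie in a common plane. *)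

From mathcomp Require Import all_boot all_algebra.
From mathcomp Require Import reals.
From mathcomp.real_closed Require Import complex.
Set Implicit Arguments. Unset Strict Implicit. Unset Printing Implicit Defensive.
Import GRing.Theory.
Local Open Scope ring_scope.

(* The matrix whose rows are the vectors gamma_e, e ranging over S
   (as an indexed family: repeated vectors count separately). *)
Definition rows_of (K : fieldType) (E : finType) (S : {set E})
  (g : E -> 'rV[K]_3) : 'M[K]_(#|S|, 3) :=
  \matrix_(i < #|S|) g (enum_val i).

Definition lin_dep (K : fieldType) (E : finType) (S : {set E})
  (g : E -> 'rV[K]_3) : bool := ~~ row_free (rows_of S g).

Definition conf (K : fieldType) (E : finType) (g : E -> 'rV[K]_3) :=
  rows_of [set: E] g.

Definition in_circuit_variety (K : fieldType) (E : finType)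
  (dep : {set E} -> bool) (g : E -> 'rV[K]_3) : Prop :=
  forall S : {set E}, dep S -> lin_dep S g.

(* Liftability (rank-three setting, vectors in K^3). "Spanning a plane H"
   = the span of the gamma_e is 2-dimensional; "q notin H";
   "not all in a common plane" = they span K^3. *)
Definition liftable (K : fieldType) (E : finType)
  (dep : {set E} -> bool) : Prop :=
  forall (g : E -> 'rV[K]_3) (q : 'rV[K]_3),
    \rank (conf g) = 2%N ->
    ~~ (q <= conf g)%MS ->
    exists z : E -> K,
      in_circuit_variety dep (fun e => g e + z e *: q) /\
      \rank (conf (fun e => g e + z e *: q)) = 3%N.

Definition Ln_ground (n : nat) : finType := {s : {set 'I_n} | #|s| == 2%N}.

Definition Ln_line (n : nat) (i : 'I_n) : {set Ln_ground n} :=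
  [set e : Ln_ground n | i \in val e].

Definition Ln_circuit (n : nat) (C : {set Ln_ground n}) : bool :=
  ((#|C| == 3%N) && [exists i, C \subset Ln_line i])
  || ((#|C| == 4%N) &&
      [forall T : {set Ln_ground n},
         (T \subset C) && (#|T| == 3%N) ==> ~~ [exists i, T \subset Ln_line i]]).

Definition Ln_dep (n : nat) (S : {set Ln_ground n}) : bool :=
  [exists C : {set Ln_ground n}, Ln_circuit C && (C \subset S)].

From mathcomp Require Import all_boot all_algebra.
From mathcomp Require Import reals.
From mathcomp.real_closed Require Import complex.
From mathcomp Require Import ring.
Set Implicit Arguments. Unset Strict Implicit. Unset Printing Implicit Defensive.
Import GRing.Theory Num.Theory.
Local Open Scope ring_scope.

(* Put the ground set of L_n in the plane x3 = 0 as follows: the six pairs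
   {i,j} with i < j <= 3, which lie three by three on the lines l_0, ..., l_3
   and so form a complete quadrilateral, go to (1:0), (0:1), (1:1) as in
   [quad_coord]; every other pair repeats (1:0) or (0:1).  Lift along
   e3 = (0,0,1) with heights z.  Three dependent lifted points
   (1,0,z_x), (0,1,z_y), (a,b,z_w) force z_w = a z_x + b z_y, so each line
   through a (1:0) point and a (0:1) point propagates the linear form
   (a,b) |-> a z_{01} + b z_{02}.  Going around the four sides of the
   quadrilateral gives 2 (z_{23} - z_{01}) = 0, so when 2 != 0 that form
   determines every height and all lifted vectors stay in one plane. *)

Section Row3.
Variable K : fieldType.

Definition row3 (a b c : K) : 'rV[K]_3 := \row_(j < 3) [:: a; b; c]`_j.

Lemma row3D a b c a' b' c' :
  row3 a b c + row3 a' b' c' = row3 (a + a') (b + b') (c + c').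
Proof. by apply/rowP => -[[|[|[|j]]] lt_j3]; rewrite !mxE. Qed.

Lemma row3Z k a b c : k *: row3 a b c = row3 (k * a) (k * b) (k * c).
Proof. by apply/rowP => -[[|[|[|j]]] lt_j3]; rewrite !mxE. Qed.

Lemma row3_inj a b c a' b' c' :
  row3 a b c = row3 a' b' c' -> [/\ a = a', b = b' & c = c'].
Proof.
move=> eq_row; have coord (j : 'I_3) := congr1 (fun u : 'rV_3 => u 0 j) eq_row.
by move: (coord 0) (coord 1) (coord 2%:R); rewrite !mxE.
Qed.

Lemma sub_adds_rVP n (u v w : 'rV[K]_n) :
  reflect (exists a b, w = a *: u + b *: v) (w <= u + v)%MS.
Proof.
apply: (iffP sub_addsmxP) => [[[x y] /= ->] | [a [b ->]]].
  by exists (x 0 0), (y 0 0); rewrite -!mul_scalar_mx -!mx11_scalar.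
by exists (a%:M, b%:M); rewrite !mul_scalar_mx.
Qed.

Definition plane3 (s t : K) : 'M[K]_3 := (row3 1 0 s + row3 0 1 t)%MS.

Lemma row3_sub_plane3 s t a b : (row3 a b (a * s + b * t) <= plane3 s t)%MS.
Proof.
apply/sub_adds_rVP; exists a, b.
by rewrite !row3Z row3D !mulr0 !mulr1 addr0 add0r.
Qed.

Lemma sub_plane3_row3 s t a b c :
  (row3 a b c <= plane3 s t)%MS -> c = a * s + b * t.
Proof.
case/sub_adds_rVP=> a' [b']; rewrite !row3Z row3D !mulr0 !mulr1 addr0 add0r.
by case/row3_inj=> -> -> ->.
Qed.

Lemma rank_plane3 s t : \rank (plane3 s t) = 2.
Proof.
apply/eqP; rewrite eqn_leq (leq_trans (mxrank_adds_leqif _ _)); last first.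
  by rewrite leq_add ?rank_leq_row.
set u := row3 1 0 s; set v := row3 0 1 t.
have rank_v : \rank v = 1%N.
  apply/eqP; rewrite eqn_leq rank_leq_row lt0n mxrank_eq0.
  apply: contra_neq (@oner_neq0 K) => /(congr1 (fun r : 'rV_3 => r 0 1%:R)).
  by rewrite !mxE.
have u_notin_v : ~~ (u <= v)%MS.
  apply/sub_rVP => -[a]; rewrite row3Z mulr0 => /row3_inj[/eqP].
  by rewrite oner_eq0.
have := mxrank_leqif_sup (addsmxSr u v).
by rewrite addsmx_sub submx_refl andbT (negbTE u_notin_v) rank_v => /ltn_leqif ->.
Qed.

Lemma dependent_row3 s t a b c :
  (\rank (row3 1 0 s + row3 0 1 t + row3 a b c)%MS < 3)%N -> c = a * s + b * t.
Proof.
move=> rank_lt3; apply: (@sub_plane3_row3 s t).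
apply: submx_trans (addsmxSr (plane3 s t) _) _.
rewrite -(geq_leqif (mxrank_leqif_sup (addsmxSl (plane3 s t) (row3 a b c)))).
by rewrite rank_plane3.
Qed.

End Row3.

Section RowsOf.
Variables (K : fieldType) (E : finType).
Implicit Type g : E -> 'rV[K]_3.

Lemma row_sub_rows_of (S : {set E}) g e : e \in S -> (g e <= rows_of S g)%MS.
Proof.
move=> eS; have := row_sub (enum_rank_in eS e) (rows_of S g).
by rewrite rowK enum_rankK_in.
Qed.

Lemma conf_sub m g (M : 'M[K]_(m, 3)) : (forall e, (g e <= M)%MS) -> (conf g <= M)%MS.
Proof. by move=> gM; apply/row_subP => i; rewrite rowK. Qed.

Lemma rank_lin_dep_triple g x y w :
  lin_dep [set x; y; w] g -> (\rank (g x + g y + g w)%MS < 3)%N.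
Proof.
set S := [set x; y; w] => /negP not_free.
have sub_rows : (g x + g y + g w <= rows_of S g)%MS.
  by rewrite !addsmx_sub !row_sub_rows_of // !inE eqxx ?orbT.
apply: leq_ltn_trans (mxrankS sub_rows) _.
have cardS : (#|S| <= 3)%N.
  by rewrite /S setUC cardsU1 cards2; case: (_ \notin _); case: (_ != _).
rewrite (leq_trans _ cardS) // ltn_neqAle rank_leq_row andbT.
exact/negP.
Qed.

End RowsOf.

Section LnPairs.
Variable n : nat.

Lemma card_pair (i j : 'I_n) : i != j -> #|[set i; j]| == 2%N.
Proof. by move=> neq_ij; rewrite cards2 neq_ij. Qed.

Definition Ln_pair (i j : 'I_n) (neq_ij : i != j) : Ln_ground n :=
  exist _ [set i; j] (card_pair neq_ij).

Lemma mem_Ln_pair i j (neq_ij : i != j) k :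
  (k \in val (Ln_pair neq_ij)) = (k == i) || (k == j).
Proof. by rewrite !inE. Qed.

Lemma Ln_pairE i j (neq_ij : i != j) (e : Ln_ground n) :
  val e \subset [set i; j] -> e = Ln_pair neq_ij.
Proof.
move=> sub_e; apply: val_inj; apply/eqP.
by rewrite eqEcard sub_e (eqP (valP e)) cards2 neq_ij.
Qed.

Lemma Ln_dep_collinear (x y w : Ln_ground n) (c : 'I_n) :
  x != y -> x != w -> y != w ->
  c \in val x -> c \in val y -> c \in val w -> Ln_dep [set x; y; w].
Proof.
move=> nxy nxw nyw cx cy cw; apply/existsP; exists [set x; y; w].
rewrite subxx andbT /Ln_circuit setUC cardsU1 cards2 !inE negb_or nxy.
rewrite ![w == _]eq_sym nxw nyw orbF.
by apply/existsP; exists c; apply/subsetP => e; rewrite !inE => /or3P[] /eqP->.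
Qed.

End LnPairs.

Lemma neq_eqF (T : eqType) (a b : T) :
  a != b -> ((a == b) = false) * ((b == a) = false).
Proof. by move=> neq_ab; split; apply/negbTE; rewrite // eq_sym. Qed.

Section Quadrilateral.
Variables (K : fieldType) (n : nat) (i0 i1 i2 i3 : 'I_n).
Hypotheses (n01 : i0 != i1) (n02 : i0 != i2) (n03 : i0 != i3).
Hypotheses (n12 : i1 != i2) (n13 : i1 != i3) (n23 : i2 != i3).

Let quad_eqF :=
  (neq_eqF n01, neq_eqF n02, neq_eqF n03, neq_eqF n12, neq_eqF n13, neq_eqF n23).

Definition quad_coord (e : Ln_ground n) : K * K :=
  if i0 \in val e then
    if i2 \in val e then (0, 1) else if i3 \in val e then (1, 1) else (1, 0)
  else if i1 \in val e then
    if i2 \in val e then (1, 1) else (0, 1)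
  else (1, 0).

Definition quad_config (e : Ln_ground n) : 'rV[K]_3 :=
  row3 (quad_coord e).1 (quad_coord e).2 0.

Lemma quad_config_lift (k : K) e :
  quad_config e + k *: row3 0 0 1 = row3 (quad_coord e).1 (quad_coord e).2 k.
Proof. by rewrite row3Z row3D !mulr0 mulr1 !addr0 add0r. Qed.

Definition p01 := Ln_pair n01.
Definition p02 := Ln_pair n02.
Definition p03 := Ln_pair n03.
Definition p12 := Ln_pair n12.
Definition p13 := Ln_pair n13.
Definition p23 := Ln_pair n23.

Lemma quad_coord01 : quad_coord p01 = (1, 0).
Proof. by rewrite /quad_coord !mem_Ln_pair !eqxx ?orbT ?quad_eqF. Qed.
Lemma quad_coord02 : quad_coord p02 = (0, 1).
Proof. by rewrite /quad_coord !mem_Ln_pair !eqxx ?orbT ?quad_eqF. Qed.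
Lemma quad_coord03 : quad_coord p03 = (1, 1).
Proof. by rewrite /quad_coord !mem_Ln_pair !eqxx ?orbT ?quad_eqF. Qed.
Lemma quad_coord12 : quad_coord p12 = (1, 1).
Proof. by rewrite /quad_coord !mem_Ln_pair !eqxx ?orbT ?quad_eqF. Qed.
Lemma quad_coord13 : quad_coord p13 = (0, 1).
Proof. by rewrite /quad_coord !mem_Ln_pair !eqxx ?orbT ?quad_eqF. Qed.
Lemma quad_coord23 : quad_coord p23 = (1, 0).
Proof. by rewrite /quad_coord !mem_Ln_pair !eqxx ?orbT ?quad_eqF. Qed.

Let quad_coordE :=
  (quad_coord01, quad_coord02, quad_coord03, quad_coord12, quad_coord13, quad_coord23).

Section Lift.
Variable z : Ln_ground n -> K.
Hypothesis z_lifts :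
  in_circuit_variety (@Ln_dep n) (fun e => quad_config e + z e *: row3 0 0 1).

Lemma lift_collinear (x y w : Ln_ground n) (c : 'I_n) :
  c \in val x -> c \in val y -> c \in val w ->
  quad_coord x = (1, 0) -> quad_coord y = (0, 1) ->
  z w = (quad_coord w).1 * z x + (quad_coord w).2 * z y.
Proof.
move=> cx cy cw coord_x coord_y.
have [<- | nxw] := eqVneq x w; first by rewrite coord_x mul1r mul0r addr0.
have [<- | nyw] := eqVneq y w; first by rewrite coord_y mul1r mul0r add0r.
have nxy : x != y.
  by apply: contra_neq (@oner_neq0 K) => exy; move: coord_x; rewrite exy coord_y => -[].
have := rank_lin_dep_triple (z_lifts (Ln_dep_collinear nxy nxw nyw cx cy cw)).
by rewrite /= !quad_config_lift coord_x coord_y => /dependent_row3.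
Qed.

Lemma lift_quadrilateral : (2 : K) != 0 -> z p23 = z p01 /\ z p13 = z p02.
Proof.
move=> two_neq0.
have line0 : z p03 = z p01 + z p02.
  by rewrite (@lift_collinear p01 p02 p03 i0) ?quad_coordE ?mem_Ln_pair ?eqxx ?orbT ?mul1r.
have line1 : z p12 = z p01 + z p13.
  by rewrite (@lift_collinear p01 p13 p12 i1) ?quad_coordE ?mem_Ln_pair ?eqxx ?orbT ?mul1r.
have line2 : z p12 = z p23 + z p02.
  by rewrite (@lift_collinear p23 p02 p12 i2) ?quad_coordE ?mem_Ln_pair ?eqxx ?orbT ?mul1r.
have line3 : z p03 = z p23 + z p13.
  by rewrite (@lift_collinear p23 p13 p03 i3) ?quad_coordE ?mem_Ln_pair ?eqxx ?orbT ?mul1r.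
have z23 : z p23 = z p01.
  have : 2 * (z p23 - z p01) = 0.
    transitivity ((z p23 + z p13 - z p03) - (z p01 + z p13 - z p12)
                  + (z p23 + z p02 - z p12) - (z p01 + z p02 - z p03)); first by ring.
    by rewrite -line0 -line1 -line2 -line3 !subrr !(subr0, addr0).
  by move/eqP; rewrite mulf_eq0 (negbTE two_neq0) subr_eq0 => /eqP.
by split=> //; apply: (@addrI _ (z p23)); rewrite -line3 line0 z23.
Qed.

Lemma lift_in_plane :
  (2 : K) != 0 -> forall e, z e = (quad_coord e).1 * z p01 + (quad_coord e).2 * z p02.
Proof.
move=> two_neq0 e; have [z23 z13] := lift_quadrilateral two_neq0.
have through0 (f : Ln_ground n) :
    i0 \in val f -> z f = (quad_coord f).1 * z p01 + (quad_coord f).2 * z p02.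
  by move=> f0; apply: (@lift_collinear p01 p02 f i0); rewrite ?quad_coordE ?mem_Ln_pair ?eqxx.
have through1 (f : Ln_ground n) :
    i1 \in val f -> z f = (quad_coord f).1 * z p01 + (quad_coord f).2 * z p02.
  move=> f1; rewrite -z13.
  by apply: (@lift_collinear p01 p13 f i1); rewrite ?quad_coordE ?mem_Ln_pair ?eqxx ?orbT.
have [/through0 // | e0] := boolP (i0 \in val e).
have [/through1 // | e1] := boolP (i1 \in val e).
have [/(Ln_pairE n23) -> | /subsetPn[c ce]] := boolP (val e \subset [set i2; i3]).
  by rewrite quad_coordE z23 mul1r mul0r addr0.
rewrite !inE negb_or => /andP[c2 c3].
have c0 : i0 != c by apply: contraNneq e0 => ->.
have c1 : i1 != c by apply: contraNneq e1 => ->.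
have [coord_c0 coord_c1] :
    quad_coord (Ln_pair c0) = (1, 0) /\ quad_coord (Ln_pair c1) = (0, 1).
  rewrite /quad_coord !mem_Ln_pair !eqxx ?orbT !quad_eqF.
  by rewrite !(neq_eqF c0, neq_eqF c1, neq_eqF c2, neq_eqF c3).
rewrite (@lift_collinear (Ln_pair c0) (Ln_pair c1) e c) ?mem_Ln_pair ?eqxx ?orbT //.
rewrite (through0 (Ln_pair c0)) ?(through1 (Ln_pair c1)) ?mem_Ln_pair ?eqxx //.
by rewrite coord_c0 coord_c1 !mul1r !mul0r addr0 add0r.
Qed.

End Lift.

Lemma conf_quad_config : (conf quad_config == plane3 0 0)%MS.
Proof.
apply/andP; split.
  apply: conf_sub => e; have := row3_sub_plane3 0 0 (quad_coord e).1 (quad_coord e).2.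
  by rewrite !mulr0 addr0.
have row_conf e : (quad_config e <= conf quad_config)%MS.
  exact: row_sub_rows_of (in_setT e).
have := row_conf p01; have := row_conf p02.
by rewrite addsmx_sub /quad_config !quad_coordE => -> ->.
Qed.

Lemma quad_not_liftable : (2 : K) != 0 -> ~ @liftable K _ (@Ln_dep n).
Proof.
move=> two_neq0 /(_ quad_config (row3 0 0 1)); rewrite !(eqmxP conf_quad_config).
case=> [||z [z_lifts rank3]]; first exact: rank_plane3.
  by apply/negP => /sub_plane3_row3/eqP; rewrite !mulr0 addr0 oner_eq0.
have : (conf (fun e => (quad_config e + z e *: row3 0 0 1)%R)
          <= plane3 (z p01) (z p02))%MS.
  apply: conf_sub => e; rewrite quad_config_lift (lift_in_plane z_lifts two_neq0 e).
  exact: row3_sub_plane3.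
by move/mxrankS; rewrite rank3 rank_plane3.
Qed.

End Quadrilateral.

Unset Implicit Arguments.
Theorem lemma6p3 (R : realType) (n : nat) :
  (4 <= n)%N -> ~ @liftable R[i] (Ln_ground n) (@Ln_dep n).
Proof.
case: n => [|[|[|[|m]]]] // _.
have pt_neq j k : (j < k < 4)%N -> inord j != inord k :> 'I_m.+4.
  case/andP=> lt_jk lt_k4.
  have lt_k : (k < m.+4)%N by rewrite -addn4 (leq_trans lt_k4) ?leq_addl.
  by rewrite -val_eqE /= !inordK ?(ltn_eqF lt_jk) // (ltn_trans lt_jk lt_k).
apply: (@quad_not_liftable _ _ (inord 0) (inord 1) (inord 2) (inord 3));
  rewrite ?pt_neq //.
by rewrite pnatr_eq0.
Qed.
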